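(* In the category of pointed Frölicher spaces, let $A\subseteq X$ be a subspace containing the basepoint such that $(X,A)$ is an SNDR pair, let $i:A\hookrightarrow X$ be the inclusion and $p:X\to X/A$ the quotient map. Then the sequence $A\xrightarrow{i}X\xrightarrow{p}X/A$ is right exact: for every pointed Frölicher space $W$ the sequence of pointed sets $[X/A,W]\xrightarrow{p^*}[X,W]\xrightarrow{i^*}[A,W]$ is exact, i.e. $\operatorname{im}p^*=(i^* )^{-1}(\ast)$.
   Context: A Frölicher space is a triple $(X,\mathcal C_X,\mathcal F_X)$ with $\mathcal C_X\subseteq X^{\mathbb R}$, $\mathcal F_X\subseteq\mathbb R^X$, such that $\mathcal F_X=\{f\mid f\circ c\in C^\infty(\mathbb R,\mathbb R)\ \forall c\in\mathcal C_X\}$ and $\mathcal C_X=\{c\mid f\circ c\in C^\infty(\mathbb R,\mathbb R)\ \forall f\in\mathcal F_X\}$. Smooth maps: $g\circ\varphi\in\mathcal F_X$ for all $g\in\mathcal F_Y$. Subspaces carry the initial structure, products the structure generated by $f\circ\pi_i$, quotients the final structure. $I$ is $[0,1]$ with the subspace structure from $\mathbb R$; $\mathbf I$ is $[0,1]$ with the structure generated by those structure functions of $I$ that are constant on $[0,\epsilon)$ and on $(1-\epsilon,1]$ for some $0<\epsilon<1/4$. Pointed Frölicher spaces have a distinguished basepoint; maps preserve basepoints. For pointed $X,W$, $[X,W]$ is the set of classes of basepoint-preserving smooth maps modulo pointed smooth homotopy (smooth $H:I\times X\to W$ with $H(t,x_0)=w_0$ for all $t$), pointed by the class of the constant map; $g^*$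 denotes precomposition with $g$. FCIP: For a smooth $i:A\to X$ and a structure curve $x:\mathbb R\to X$ let $\Lambda(x,i)$ be the set of $s_*\in x^{-1}(i(A))$ that are limits of sequences $s_n\in x^{-1}(X\setminus i(A))$. A structure function $g$ on $\mathbf I\times X$ has the FCIP w.r.t. $i$ if $g\circ c$ is $C^\infty$ for every map $c=(t,x):\mathbb R\to[0,1]\times X$ with $x$ a structure curve and, for every $\epsilon>0$, $t$ $C^\infty$ on every open interval disjoint from $\bigcup_{s_*\in\Lambda(x,i)}[s_*-\epsilon,s_*+\epsilon]$; a map $g:\mathbf I\times X\to Z$ has the FCIP if $h\circ g$ does for all $h\in\mathcal F_Z$. SNDR pair: $(X,A)$ is an SNDR pair if there are a smooth $u:X\to\mathbf I$ with $u^{-1}(0)=A$ and a smooth $H:\mathbf I\times X\to X$ with the FCIP w.r.t. $i$, $H(0,x)=x$, $H(t,a)=a$ for $a\in A$, and $H(1,x)\in A$ whenever $u(x)<1$. *)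

From Stdlib Require Import Reals Relations.
Open Scope R_scope.

Definition smooth (f : R -> R) : Prop :=
  exists D : nat -> R -> R, D O = f /\
    forall n x, derivable_pt_lim (D n) x (D (S n) x).

Definition smooth_on (U : R -> Prop) (f : R -> R) : Prop :=
  exists D : nat -> R -> R, (forall x, U x -> D O x = f x) /\
    forall n x, U x -> derivable_pt_lim (D n) x (D (S n) x).

Record Frol := {
  car :> Type;
  crv : (R -> car) -> Prop;
  fns : (car -> R) -> Prop;
  fns_sat : forall f, fns f <-> (forall c, crv c -> smooth (fun s => f (c s)));
  crv_sat : forall c, crv c <-> (forall f, fns f -> smooth (fun s => f (c s)))
}.

Definition fns_of {X : Type} (C : (R -> X) -> Prop) (f : X -> R) : Prop :=
  forall c, C c -> smooth (fun s => f (c s)).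
Definition crv_of {X : Type} (F : (X -> R) -> Prop) (c : R -> X) : Prop :=
  forall f, F f -> smooth (fun s => f (c s)).

Lemma gen_crv_fns_sat (X : Type) (C0 : (R -> X) -> Prop) :
  forall f, fns_of C0 f <-> (forall c, crv_of (fns_of C0) c -> smooth (fun s => f (c s))).
Proof.
  intros f; split.
  - intros Hf c Hc; apply Hc; exact Hf.
  - intros H c Hc; apply H; intros g Hg; apply Hg; exact Hc.
Qed.

Lemma gen_crv_crv_sat (X : Type) (C0 : (R -> X) -> Prop) :
  forall c, crv_of (fns_of C0) c <-> (forall f, fns_of C0 f -> smooth (fun s => f (c s))).
Proof. intros c; tauto. Qed.

Lemma gen_fns_fns_sat (X : Type) (F0 : (X -> R) -> Prop) :
  forall f, fns_of (crv_of F0) f <-> (forall c, crv_of F0 c -> smooth (fun s => f (c s))).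
Proof. intros f; tauto. Qed.

Lemma gen_fns_crv_sat (X : Type) (F0 : (X -> R) -> Prop) :
  forall c, crv_of F0 c <-> (forall f, fns_of (crv_of F0) f -> smooth (fun s => f (c s))).
Proof.
  intros c; split.
  - intros Hc f Hf; apply Hf; exact Hc.
  - intros H f Hf; apply H; intros d Hd; apply Hd; exact Hf.
Qed.

Definition gen_by_crv (X : Type) (C0 : (R -> X) -> Prop) : Frol :=
  {| car := X; crv := crv_of (fns_of C0); fns := fns_of C0;
     fns_sat := gen_crv_fns_sat X C0; crv_sat := gen_crv_crv_sat X C0 |}.

Definition gen_by_fns (X : Type) (F0 : (X -> R) -> Prop) : Frol :=
  {| car := X; crv := crv_of F0; fns := fns_of (crv_of F0);
     fns_sat := gen_fns_fns_sat X F0; crv_sat := gen_fns_crv_sat X F0 |}.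

Definition smooth_map (X Y : Frol) (phi : X -> Y) : Prop :=
  forall g, fns Y g -> fns X (fun x => g (phi x)).

(** The reals with their standard structure (curves = C^infty curves). *)
Definition Rfrol : Frol := gen_by_fns R (fun f => forall x, f x = x).

Definition Sub (X : Frol) (P : X -> Prop) : Frol :=
  gen_by_fns {x : X | P x}
    (fun g => exists f, fns X f /\ g = (fun a => f (proj1_sig a))).

Definition Prod (X Y : Frol) : Frol :=
  gen_by_fns (car X * car Y)
    (fun g => (exists f, fns X f /\ g = (fun p => f (fst p))) \/
              (exists f, fns Y f /\ g = (fun p => f (snd p)))).

(** Quotient X/A: collapse A to a point; final structure w.r.t. the projection. *)
Definition qcls {X : Type} (A : X -> Prop) (x : X) : X -> Prop :=
  fun y => x = y \/ (A x /\ A y).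
Definition Qcar (X : Type) (A : X -> Prop) : Type :=
  {S : X -> Prop | exists x, S = qcls A x}.
Definition qproj {X : Type} (A : X -> Prop) (x : X) : Qcar X A :=
  exist _ (qcls A x) (ex_intro _ x eq_refl).
Definition Quot (X : Frol) (A : X -> Prop) : Frol :=
  gen_by_crv (Qcar X A)
    (fun c => exists c0, crv X c0 /\ c = (fun s => qproj A (c0 s))).

Definition I : Frol := Sub Rfrol (fun t : R => 0 <= t <= 1).
Definition boldI : Frol :=
  gen_by_fns (car I)
    (fun g => fns I g /\ exists eps, 0 < eps < 1/4 /\ exists a b,
       forall t : car I, (proj1_sig t < eps -> g t = a) /\
                         (1 - eps < proj1_sig t -> g t = b)).

Lemma i0_proof : 0 <= 0 <= 1. Proof. split; [apply Rle_refl | apply Rle_0_1]. Qed.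
Lemma i1_proof : 0 <= 1 <= 1. Proof. split; [apply Rle_0_1 | apply Rle_refl]. Qed.
Definition i0 : car I := exist (fun t : R => 0 <= t <= 1) 0 i0_proof.
Definition i1 : car I := exist (fun t : R => 0 <= t <= 1) 1 i1_proof.

Definition Lambda {X A : Type} (i : A -> X) (x : R -> X) (s0 : R) : Prop :=
  (exists a, i a = x s0) /\
  exists sn : nat -> R, (forall n, ~ (exists a, i a = x (sn n))) /\ Un_cv sn s0.

Definition fcip_fn (X A : Frol) (i : A -> X) (g : car I * car X -> R) : Prop :=
  forall (t : R -> car I) (x : R -> car X), crv X x ->
    (forall eps, eps > 0 -> forall a b, a < b ->
       (forall s, a < s < b -> forall s0, Lambda i x s0 ->
          ~ (s0 - eps <= s <= s0 + eps)) ->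
       smooth_on (fun s => a < s < b) (fun s => proj1_sig (t s))) ->
    smooth (fun s => g (t s, x s)).

Definition fcip_map (X A : Frol) (i : A -> X) (Z : Frol)
    (g : car I * car X -> car Z) : Prop :=
  forall h, fns Z h -> fcip_fn X A i (fun p => h (g p)).

Definition SNDR (X : Frol) (A : X -> Prop) : Prop :=
  exists u : car X -> car boldI, smooth_map X boldI u /\
    (forall x, proj1_sig (u x) = 0 <-> A x) /\
  exists H : car (Prod boldI X) -> car X,
    smooth_map (Prod boldI X) X H /\
    fcip_map X (Sub X A) (@proj1_sig _ A) X H /\
    (forall x, H (i0, x) = x) /\
    (forall t a, A a -> H (t, a) = a) /\
    (forall x, proj1_sig (u x) < 1 -> A (H (i1, x))).

Record PFrol := { sp :> Frol; bp : car sp }.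

Definition pmap (X W : PFrol) (f : car X -> car W) : Prop :=
  smooth_map X W f /\ f (bp X) = bp W.

Definition phomotopic (X W : PFrol) (f g : car X -> car W) : Prop :=
  exists H : car (Prod I X) -> car W, smooth_map (Prod I X) W H /\
    (forall x, H (i0, x) = f x) /\ (forall x, H (i1, x) = g x) /\
    (forall t, H (t, bp X) = bp W).

(** Equality in [X,W]: the equivalence relation generated by pointed smooth homotopy. *)
Definition htpy_eq (X W : PFrol) : relation (car X -> car W) :=
  clos_refl_sym_trans _ (phomotopic X W).

Definition PSub (X : PFrol) (A : car X -> Prop) (hA : A (bp X)) : PFrol :=
  {| sp := Sub X A; bp := exist A (bp X) hA |}.
Definition PQuot (X : PFrol) (A : car X -> Prop) : PFrol :=
  {| sp := Quot X A; bp := qproj A (bp X) |}.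

From Stdlib Require Import Reals Relations Lra Lia ClassicalEpsilon
  FunctionalExtensionality PropExtensionality ProofIrrelevance.
Open Scope R_scope.

(** Direction (=>) is formal: a homotopy [f ~ g o p] restricts to [A], where
    [g o p] is constant.  Direction (<=) rests on the homotopy extension
    property of SNDR pairs ([homotopy_extension]): if [f|A ~ psi] by a pointed
    homotopy [K], then [f] is homotopic to a map restricting to [psi].  Using the
    data [(u,H)] of the pair we first deform [f] along [H] near [A], and then run
    [K] composed with the retraction [x |-> H(1,x)], damped by a smooth cut-off of
    [u].  Iterating along a chain of homotopies, a null-homotopy of [f|A] gives a
    map homotopic to [f] that kills [A]; it factors through [X/A]
    ([quot_factor]). *)

Lemma derivable_pt_lim_local f g x l :
  (exists d, 0 < d /\ forall y, Rabs (y - x) < d -> f y = g y) ->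
  derivable_pt_lim g x l -> derivable_pt_lim f x l.
Proof.
  intros [d [Hd Hfg]] Hg eps Heps.
  destruct (Hg eps Heps) as [del Hdel].
  assert (Hm : 0 < Rmin d del) by (apply Rmin_pos; [lra | apply cond_pos]).
  exists (mkposreal _ Hm). intros h Hh0 Hh. simpl in Hh.
  rewrite (Hfg (x + h)).
  2:{ replace (x + h - x) with h by ring.
      eapply Rlt_le_trans; [apply Hh | apply Rmin_l]. }
  rewrite (Hfg x) by (rewrite Rminus_diag, Rabs_R0; lra).
  apply Hdel; auto. eapply Rlt_le_trans; [apply Hh | apply Rmin_r].
Qed.

Lemma derivable_pt_lim_ext f g x l l' :
  (forall y, f y = g y) -> l = l' -> derivable_pt_lim g x l' -> derivable_pt_lim f x l.
Proof.
  intros Hfg -> Hg. apply derivable_pt_lim_local with g; auto.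
  exists 1; split; [lra | auto].
Qed.

Fixpoint Cn (n : nat) (f : R -> R) : Prop :=
  match n with
  | O => True
  | S m => exists f', (forall x, derivable_pt_lim f x (f' x)) /\ Cn m f'
  end.

(** This is equivalent to [smooth]
    ([smooth_Cinf] below) but, being defined degree by degree, it is closed under
    the usual operations by straightforward inductions. *)
Definition Cinf (f : R -> R) : Prop := forall n, Cn n f.

Lemma Cn_ext : forall n f g, (forall x, f x = g x) -> Cn n f -> Cn n g.
Proof.
  induction n as [|n IH]; simpl; auto.
  intros f g Hfg [f' [Hd Hc]]. exists f'; split; auto.
  intros x. apply derivable_pt_lim_ext with f (f' x); auto.
Qed.

Lemma Cn_pred : forall n f, Cn (S n) f -> Cn n f.
Proof.
  induction n as [|n IH]; simpl; auto.
  intros f [f' [Hd Hc]]. exists f'; split; auto.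
Qed.

Lemma Cn_const : forall n c, Cn n (fun _ => c).
Proof.
  induction n as [|n IH]; simpl; auto. intros c.
  exists (fun _ => 0). split; auto. intros x. apply derivable_pt_lim_const.
Qed.

Lemma Cn_id : forall n, Cn n (fun x => x).
Proof.
  destruct n; simpl; auto. exists (fun _ => 1). split.
  - intros x. apply derivable_pt_lim_id.
  - apply Cn_const.
Qed.

Lemma Cn_plus : forall n f g, Cn n f -> Cn n g -> Cn n (fun x => f x + g x).
Proof.
  induction n as [|n IH]; simpl; auto.
  intros f g [f' [Hf Cf]] [g' [Hg Cg]]. exists (fun x => f' x + g' x). split; auto.
  intros x. exact (derivable_pt_lim_plus f g x _ _ (Hf x) (Hg x)).
Qed.

Lemma Cn_mult : forall n f g, Cn n f -> Cn n g -> Cn n (fun x => f x * g x).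
Proof.
  induction n as [|n IH]; simpl; auto.
  intros f g [f' [Hf Cf]] [g' [Hg Cg]].
  exists (fun x => f' x * g x + f x * g' x). split.
  - intros x. exact (derivable_pt_lim_mult f g x _ _ (Hf x) (Hg x)).
  - apply Cn_plus; apply IH; auto; apply Cn_pred; simpl; eauto.
Qed.

Lemma Cinf_const c : Cinf (fun _ => c).
Proof. intro n; apply Cn_const. Qed.

Lemma Cinf_id : Cinf (fun x => x).
Proof. intro n; apply Cn_id. Qed.

Lemma Cinf_plus f g : Cinf f -> Cinf g -> Cinf (fun x => f x + g x).
Proof. intros F G n; apply Cn_plus; auto. Qed.

Lemma Cinf_mult f g : Cinf f -> Cinf g -> Cinf (fun x => f x * g x).
Proof. intros F G n; apply Cn_mult; auto. Qed.

Lemma Cinf_ext f g : (forall x, f x = g x) -> Cinf f -> Cinf g.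
Proof. intros E F n; apply Cn_ext with f; auto. Qed.

Lemma Cinf_opp f : Cinf f -> Cinf (fun x => - f x).
Proof.
  intros F. apply Cinf_ext with (fun x => (-1) * f x); [intros; ring |].
  apply Cinf_mult; auto; apply Cinf_const.
Qed.

Lemma Cinf_minus f g : Cinf f -> Cinf g -> Cinf (fun x => f x - g x).
Proof.
  intros F G. apply Cinf_ext with (fun x => f x + - g x); [intros; ring |].
  apply Cinf_plus; auto; apply Cinf_opp; auto.
Qed.

Lemma Cinf_derive f : Cinf f -> exists f', (forall x, derivable_pt_lim f x (f' x)) /\ Cinf f'.
Proof.
  intros F. destruct (F 1%nat) as [f0 [H0 _]]. exists f0; split; auto.
  intros n. destruct (F (S n)) as [g [Hg Cg]].
  apply Cn_ext with g; auto. intros x. eapply uniqueness_limite; eauto.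
Qed.

Lemma Cinf_comp f g : Cinf f -> Cinf g -> Cinf (fun x => f (g x)).
Proof.
  intros F G n. revert f g F G. induction n as [|n IH]; simpl; auto. intros f g F G.
  destruct (Cinf_derive f F) as [f' [Hf F']]. destruct (Cinf_derive g G) as [g' [Hg G']].
  exists (fun x => f' (g x) * g' x). split.
  - intros x. exact (derivable_pt_lim_comp g f x _ _ (Hg x) (Hf (g x))).
  - apply (Cn_mult n (fun x => f' (g x)) g'); auto.
Qed.

Lemma Cinf_inv h : Cinf h -> (forall x, 0 < h x) -> Cinf (fun x => / h x).
Proof.
  intros Hs Hp n. revert h Hs Hp. induction n as [|n IH]; simpl; auto. intros h Hs Hp.
  destruct (Cinf_derive h Hs) as [h' [Hh H']].
  exists (fun x => - h' x * (/ h x * / h x)). split.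
  - intros x. assert (hx : h x <> 0) by (specialize (Hp x); lra).
    eapply derivable_pt_lim_ext;
      [| | exact (derivable_pt_lim_div (fct_cte 1) h x _ _
                    (derivable_pt_lim_const 1 x) (Hh x) hx)].
    + intros y. unfold fct_cte, div_fct. lra.
    + unfold fct_cte, Rsqr. field; auto.
  - apply (Cn_mult n (fun x => - h' x) (fun x => / h x * / h x)).
    + apply Cinf_opp; auto.
    + apply (Cn_mult n (fun x => / h x) (fun x => / h x)); apply IH; auto.
Qed.

(** A chosen derivative, used to differentiate functions known to be smooth
    only locally. *)
Definition der (f : R -> R) (x : R) : R :=
  epsilon (inhabits 0) (fun l => derivable_pt_lim f x l).

Lemma der_spec f x l :
  derivable_pt_lim f x l -> derivable_pt_lim f x (der f x) /\ der f x = l.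
Proof.
  intros H.
  assert (H' : derivable_pt_lim f x (der f x))
    by (unfold der; apply epsilon_spec; eauto).
  split; auto. eapply uniqueness_limite; eauto.
Qed.

Definition locally_Cinf (f : R -> R) : Prop :=
  forall x, exists d, 0 < d /\
    exists g, Cinf g /\ forall y, Rabs (y - x) < d -> f y = g y.

Lemma locally_Cinf_Cn : forall n f, locally_Cinf f -> Cn n f.
Proof.
  induction n as [|n IH]; simpl; auto. intros f L. exists (der f). split.
  - intros x. destruct (L x) as [d [Hd [g [G Hg]]]].
    destruct (Cinf_derive g G) as [g' [Hg' _]].
    apply (der_spec f x (g' x)). apply derivable_pt_lim_local with g; eauto.
  - apply IH. intros x. destruct (L x) as [d [Hd [g [G Hg]]]].
    destruct (Cinf_derive g G) as [g' [Hg' G']].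
    exists d; split; auto. exists g'; split; auto. intros y Hy.
    apply (der_spec f y (g' y)). apply derivable_pt_lim_local with g; auto.
    exists (d - Rabs (y - x)); split; [lra |]. intros z Hz. apply Hg.
    replace (z - x) with ((z - y) + (y - x)) by ring.
    eapply Rle_lt_trans; [apply Rabs_triang | lra].
Qed.

Lemma Cinf_local f : locally_Cinf f -> Cinf f.
Proof. intros L n; apply locally_Cinf_Cn; auto. Qed.

Lemma smooth_Cinf f : smooth f <-> Cinf f.
Proof.
  split.
  - intros [D [HD0 HD]].
    assert (HDn : forall n k, Cn n (D k)).
    { induction n as [|n IH]; simpl; auto. intros k. exists (D (S k)); split; auto. }
    intros n. rewrite <- HD0. apply HDn.
  - intros F. exists (fun n => Nat.iter n der f).
    assert (Hs : forall n, Cinf (Nat.iter n der f)).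
    { induction n as [|n IH]; simpl; auto.
      destruct (Cinf_derive _ IH) as [g' [Hg G']].
      apply Cinf_ext with g'; auto.
      intros x; symmetry; apply (der_spec _ x (g' x)); auto. }
    split; auto. intros n x. simpl.
    destruct (Cinf_derive _ (Hs n)) as [g' [Hg _]].
    apply (der_spec _ x (g' x)); auto.
Qed.

Lemma Cinf_pos_nbhd m s0 :
  Cinf m -> 0 < m s0 -> exists d, 0 < d /\ forall s, Rabs (s - s0) < d -> 0 < m s.
Proof.
  intros M Hp. destruct (M 1%nat) as [m' [Hm _]].
  assert (C : continuity_pt m s0)
    by (apply derivable_continuous_pt; exists (m' s0); apply Hm).
  assert (Hpos : m s0 / 2 > 0) by lra.
  destruct (C _ Hpos) as [a [Ha Hc]].
  exists a; split; auto. intros s Hs.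
  destruct (Req_dec s s0) as [->|Hne]; auto.
  assert (Hd : dist R_met (m s) (m s0) < m s0 / 2)
    by (apply Hc; split; [split; [exact Logic.I | auto] | exact Hs]).
  simpl in Hd. unfold R_dist in Hd. apply Rabs_def2 in Hd. lra.
Qed.

(** The functions [x^(-k) exp(-1/x)] (extended by [0] on [x <= 0]); their
    derivatives are combinations of the same functions, which makes the whole
    family -- in particular [exp(-1/x)] -- smooth. *)
Definition decay (k : nat) (x : R) : R :=
  if Rlt_dec 0 x then (/ x) ^ k * exp (- / x) else 0.

Lemma decay_pos k x : 0 < x -> decay k x = (/ x) ^ k * exp (- / x).
Proof. intros H. unfold decay. destruct (Rlt_dec 0 x); auto; lra. Qed.

Lemma decay_npos k x : x <= 0 -> decay k x = 0.
Proof. intros H. unfold decay. destruct (Rlt_dec 0 x); auto; lra. Qed.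

Lemma exp_INR_mult n z : exp (INR n * z) = exp z ^ n.
Proof.
  induction n as [|n IH]. { simpl. rewrite Rmult_0_l, exp_0; auto. }
  rewrite S_INR. replace ((INR n + 1) * z) with (INR n * z + z) by ring.
  rewrite exp_plus, IH. simpl. ring.
Qed.

(** [decay k x = O(x)] as [x -> 0+]: the key to differentiability at [0]. *)
Lemma decay_bound k x : 0 < x -> (/ x) ^ k * exp (- / x) <= INR (S k) ^ (S k) * x.
Proof.
  intros Hx. set (y := / x). assert (Hy : 0 < y) by (apply Rinv_0_lt_compat; auto).
  set (m := INR (S k)). assert (Hm : 0 < m) by (apply lt_0_INR; lia).
  assert (He : (y / m) ^ (S k) <= exp y).
  { assert (E : y = m * (y / m)) by (field; lra). rewrite E at 2. unfold m at 2.
    rewrite exp_INR_mult. apply pow_incr. split.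
    - apply Rlt_le, Rdiv_lt_0_compat; auto.
    - assert (0 < y / m) by (apply Rdiv_lt_0_compat; auto).
      pose proof (exp_ineq1 (y / m)). lra. }
  assert (Hp : 0 < (y / m) ^ S k) by (apply pow_lt, Rdiv_lt_0_compat; auto).
  rewrite exp_Ropp.
  apply Rle_trans with (y ^ k * / ((y / m) ^ S k)).
  - apply Rmult_le_compat_l; [apply pow_le; lra |]. apply Rinv_le_contravar; auto.
  - right. unfold y. replace x with (/ y) by (unfold y; rewrite Rinv_inv; auto).
    rewrite Rinv_inv. fold y. simpl. unfold Rdiv. rewrite Rpow_mult_distr, pow_inv.
    assert (y ^ k <> 0) by (apply pow_nonzero; lra).
    assert (m ^ k <> 0) by (apply pow_nonzero; lra).
    field. repeat split; lra.
Qed.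

Lemma derivable_pt_lim_Rinv x : x <> 0 -> derivable_pt_lim (fun y => / y) x (- / (x * x)).
Proof.
  intros Hx.
  eapply derivable_pt_lim_ext;
    [| | exact (derivable_pt_lim_div (fct_cte 1) id x _ _
                  (derivable_pt_lim_const 1 x) (derivable_pt_lim_id x) Hx)].
  - intros y. unfold fct_cte, div_fct, id. lra.
  - unfold fct_cte, id, Rsqr. field; auto.
Qed.

(** At [0] every [decay k] is flat: its difference quotient is [decay (S k) h],
    which is [O(h)] by [decay_bound]. *)
Lemma decay_derive_0 k : derivable_pt_lim (decay k) 0 0.
Proof.
  intros eps Heps. set (C := INR (S (S k)) ^ (S (S k))).
  assert (HC : 0 < C) by (apply pow_lt, lt_0_INR; lia).
  assert (Hd : 0 < eps / (C + 1)) by (apply Rdiv_lt_0_compat; lra).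
  exists (mkposreal _ Hd). intros h Hh0 Hh. simpl in Hh.
  rewrite Rplus_0_l, (decay_npos k 0), !Rminus_0_r by lra.
  destruct (Rlt_le_dec 0 h) as [Hp|Hp].
  - rewrite decay_pos by auto.
    replace ((/ h) ^ k * exp (- / h) / h) with ((/ h) ^ (S k) * exp (- / h))
      by (simpl; field; lra).
    pose proof (decay_bound (S k) h Hp) as Hb. fold C in Hb.
    assert (0 <= (/ h) ^ S k * exp (- / h)).
    { apply Rmult_le_pos; [apply pow_le; left; apply Rinv_0_lt_compat; auto |].
      left; apply exp_pos. }
    rewrite Rabs_pos_eq by auto. rewrite Rabs_pos_eq in Hh by lra.
    apply Rle_lt_trans with (C * h); auto.
    apply Rlt_le_trans with (C * (eps / (C + 1))); [apply Rmult_lt_compat_l; auto |].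
    unfold Rdiv. rewrite <- Rmult_assoc. apply Rmult_le_reg_r with (C + 1); [lra |].
    rewrite Rmult_assoc, Rinv_l by lra. nra.
  - rewrite decay_npos by auto. unfold Rdiv. rewrite Rmult_0_l, Rabs_R0. auto.
Qed.

Lemma decay_derive_pos k x : 0 < x ->
  derivable_pt_lim (decay k) x (- INR k * decay (S k) x + decay (S (S k)) x).
Proof.
  intros Hx.
  apply derivable_pt_lim_local with (fun y => (/ y) ^ k * exp (- / y)).
  { exists x; split; auto. intros y Hy. apply decay_pos. apply Rabs_def2 in Hy. lra. }
  assert (Hx0 : x <> 0) by lra.
  pose proof (derivable_pt_lim_comp _ _ x _ _ (derivable_pt_lim_Rinv x Hx0)
                (derivable_pt_lim_pow (/ x) k)) as D1.
  assert (D2 : derivable_pt_lim (fun y => - / y) x (/ (x * x))).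
  { eapply derivable_pt_lim_ext;
      [| | exact (derivable_pt_lim_opp _ x _ (derivable_pt_lim_Rinv x Hx0))].
    - intros; reflexivity.
    - field; auto. }
  pose proof (derivable_pt_lim_comp _ _ x _ _ D2 (derivable_pt_lim_exp (- / x))) as D3.
  eapply derivable_pt_lim_ext; [| | exact (derivable_pt_lim_mult _ _ x _ _ D1 D3)].
  - intros y. reflexivity.
  - rewrite !decay_pos by auto. unfold comp.
    destruct k as [|j]; [simpl; field; auto |].
    rewrite S_INR. simpl pow. simpl Nat.pred. field. auto.
Qed.

Lemma decay_derive k x :
  derivable_pt_lim (decay k) x (- INR k * decay (S k) x + decay (S (S k)) x).
Proof.
  destruct (Rlt_le_dec 0 x) as [Hx|[Hx|Hx]].
  - apply decay_derive_pos; auto.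
  - apply derivable_pt_lim_local with (fun _ => 0).
    { exists (- x); split; [lra |]. intros y Hy. apply decay_npos. apply Rabs_def2 in Hy. lra. }
    rewrite !decay_npos by lra. replace (- INR k * 0 + 0) with 0 by ring.
    apply derivable_pt_lim_const.
  - subst x. rewrite !decay_npos by lra. replace (- INR k * 0 + 0) with 0 by ring.
    apply decay_derive_0.
Qed.

Lemma Cinf_decay k : Cinf (decay k).
Proof.
  intros n. revert k. induction n as [|n IH]; simpl; auto. intros k.
  exists (fun x => - INR k * decay (S k) x + decay (S (S k)) x). split.
  - apply decay_derive.
  - apply Cn_plus; auto. apply (Cn_mult n (fun _ => - INR k)); auto. apply Cn_const.
Qed.

Lemma decay0_pos x : 0 < x -> 0 < decay 0 x.
Proof. intros H. rewrite decay_pos by auto. simpl. rewrite Rmult_1_l. apply exp_pos. Qed.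

Lemma decay0_nonneg x : 0 <= decay 0 x.
Proof.
  destruct (Rlt_le_dec 0 x); [left; apply decay0_pos; auto | rewrite decay_npos; lra].
Qed.

Definition smooth_step (x : R) : R := decay 0 x * / (decay 0 x + decay 0 (1 - x)).

Lemma smooth_step_den_pos x : 0 < decay 0 x + decay 0 (1 - x).
Proof.
  pose proof (decay0_nonneg x); pose proof (decay0_nonneg (1 - x)).
  destruct (Rlt_le_dec 0 x).
  - pose proof (decay0_pos x r); lra.
  - pose proof (decay0_pos (1 - x) ltac:(lra)); lra.
Qed.

Lemma Cinf_smooth_step : Cinf smooth_step.
Proof.
  apply Cinf_mult; [apply Cinf_decay |].
  apply Cinf_inv; [| apply smooth_step_den_pos].
  apply Cinf_plus; [apply Cinf_decay |].
  apply (Cinf_comp (decay 0) (fun x => 1 - x)); [apply Cinf_decay |].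
  apply Cinf_minus; [apply Cinf_const | apply Cinf_id].
Qed.

Lemma smooth_step_range x : 0 <= smooth_step x <= 1.
Proof.
  unfold smooth_step. pose proof (smooth_step_den_pos x).
  pose proof (decay0_nonneg x). pose proof (decay0_nonneg (1 - x)).
  split.
  - apply Rmult_le_pos; auto. left; apply Rinv_0_lt_compat; auto.
  - apply Rmult_le_reg_r with (decay 0 x + decay 0 (1 - x)); auto.
    rewrite Rmult_assoc, Rinv_l by lra. lra.
Qed.

Lemma smooth_step_0 x : x <= 0 -> smooth_step x = 0.
Proof. intros H. unfold smooth_step. rewrite (decay_npos 0 x) by auto. ring. Qed.

Lemma smooth_step_1 x : 1 <= x -> smooth_step x = 1.
Proof.
  intros H. unfold smooth_step. rewrite (decay_npos 0 (1 - x)) by lra.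
  rewrite Rplus_0_r. field. apply Rgt_not_eq, decay0_pos; lra.
Qed.

Definition ramp (a b z : R) : R := smooth_step ((z - a) / (b - a)).

Lemma Cinf_ramp a b : Cinf (ramp a b).
Proof.
  apply (Cinf_comp smooth_step (fun z => (z - a) / (b - a))); [apply Cinf_smooth_step |].
  apply (Cinf_mult (fun z => z - a)); [| apply Cinf_const].
  apply Cinf_minus; [apply Cinf_id | apply Cinf_const].
Qed.

Lemma ramp_range a b z : 0 <= ramp a b z <= 1.
Proof. apply smooth_step_range. Qed.

Lemma ramp_lo a b z : a < b -> z <= a -> ramp a b z = 0.
Proof.
  intros. apply smooth_step_0. unfold Rdiv.
  assert (0 < / (b - a)) by (apply Rinv_0_lt_compat; lra). nra.
Qed.

Lemma ramp_hi a b z : a < b -> b <= z -> ramp a b z = 1.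
Proof.
  intros. apply smooth_step_1. apply Rmult_le_reg_r with (b - a); [lra |].
  unfold Rdiv. rewrite Rmult_assoc, Rinv_l by lra. lra.
Qed.

(** A smooth map [R -> R] with values in a ball around [s0] that is the identity
    near [s0]; it localizes curves (see [crv_local]). *)
Lemma local_reparam s0 d : 0 < d ->
  exists sg, Cinf sg /\ (forall s, Rabs (sg s - s0) < d) /\
    exists d', 0 < d' /\ forall s, Rabs (s - s0) < d' -> sg s = s.
Proof.
  intros Hd.
  set (q := fun s => (s - s0) * (s - s0)).
  exists (fun s => s0 + (s - s0) * (1 - ramp (d * d / 16) (d * d / 4) (q s))).
  assert (Hab : d * d / 16 < d * d / 4) by nra.
  split; [| split].
  - apply Cinf_plus; [apply Cinf_const |]. apply Cinf_mult.
    + apply Cinf_minus; [apply Cinf_id | apply Cinf_const].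
    + apply Cinf_minus; [apply Cinf_const |].
      apply (Cinf_comp (ramp _ _) q); [apply Cinf_ramp |].
      apply Cinf_mult; apply Cinf_minus; (apply Cinf_id || apply Cinf_const).
  - intros s. set (y := s - s0). fold y in q.
    replace (s0 + y * (1 - ramp (d * d / 16) (d * d / 4) (q s)) - s0)
      with (y * (1 - ramp (d * d / 16) (d * d / 4) (y * y))) by (unfold q, y; ring).
    pose proof (ramp_range (d * d / 16) (d * d / 4) (y * y)).
    destruct (Rle_lt_dec (d * d / 4) (y * y)) as [Hy|Hy].
    + rewrite ramp_hi by auto. rewrite Rminus_diag, Rmult_0_r, Rabs_R0; auto.
    + rewrite Rabs_mult. assert (Rabs y < d / 2).
      { destruct (Rle_lt_dec (d / 2) (Rabs y)) as [Hle|]; auto. exfalso.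
        destruct (Rle_lt_dec 0 y).
        - rewrite Rabs_pos_eq in Hle by lra. nra.
        - rewrite Rabs_left in Hle by lra. nra. }
      rewrite (Rabs_pos_eq (1 - _)) by lra. pose proof (Rabs_pos y). nra.
  - exists (d / 4). split; [lra |]. intros s Hs.
    assert (Hq : q s <= d * d / 16).
    { unfold q. destruct (Rle_lt_dec 0 (s - s0)).
      - rewrite Rabs_pos_eq in Hs by lra. nra.
      - rewrite Rabs_left in Hs by lra. nra. }
    rewrite ramp_lo by auto. ring.
Qed.

Lemma smooth_map_crv (X Y : Frol) (phi : X -> Y) c :
  smooth_map X Y phi -> crv X c -> crv Y (fun s => phi (c s)).
Proof.
  intros Hp Hc. apply (proj2 (crv_sat Y _)). intros g Hg.
  exact (proj1 (fns_sat X _) (Hp g Hg) c Hc).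
Qed.

Lemma smooth_map_of_crv (X Y : Frol) (phi : X -> Y) :
  (forall c, crv X c -> crv Y (fun s => phi (c s))) -> smooth_map X Y phi.
Proof.
  intros H g Hg. apply (proj2 (fns_sat X _)). intros c Hc.
  exact (proj1 (crv_sat Y _) (H c Hc) g Hg).
Qed.

Lemma crv_fns (X : Frol) c f : crv X c -> fns X f -> Cinf (fun s => f (c s)).
Proof. intros Hc Hf. apply smooth_Cinf. exact (proj1 (crv_sat X _) Hc f Hf). Qed.

Lemma crv_reparam (X : Frol) c sg : crv X c -> Cinf sg -> crv X (fun s => c (sg s)).
Proof.
  intros Hc Hs. apply (proj2 (crv_sat X _)). intros f Hf. apply smooth_Cinf.
  exact (Cinf_comp _ _ (crv_fns X c f Hc Hf) Hs).
Qed.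

Lemma crv_ext (X : Frol) c c' : crv X c -> (forall s, c s = c' s) -> crv X c'.
Proof. intros H E. replace c' with c; auto. apply functional_extensionality; auto. Qed.

Lemma crv_const (X : Frol) (x : car X) : crv X (fun _ => x).
Proof. apply (proj2 (crv_sat X _)). intros f _. apply smooth_Cinf, Cinf_const. Qed.

Lemma crv_local (X : Frol) (c : R -> car X) :
  (forall s0, exists d, 0 < d /\ forall sg, Cinf sg ->
     (forall s, Rabs (sg s - s0) < d) -> crv X (fun s => c (sg s))) ->
  crv X c.
Proof.
  intros Hloc. apply (proj2 (crv_sat X _)). intros f Hf.
  apply smooth_Cinf, Cinf_local. intros s0.
  destruct (Hloc s0) as [d [Hd Hc]].
  destruct (local_reparam s0 d Hd) as [sg [Ssg [Bsg [d' [Hd' Isg]]]]].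
  exists d'; split; auto. exists (fun s => f (c (sg s))). split.
  - apply crv_fns; auto.
  - intros s Hs. rewrite Isg; auto.
Qed.

Lemma crv_R c : crv Rfrol c <-> Cinf c.
Proof.
  simpl. unfold crv_of. split.
  - intros H. apply smooth_Cinf. apply (H (fun x => x)); auto.
  - intros H f Hf. apply smooth_Cinf. apply Cinf_ext with c; auto.
Qed.

Lemma crv_Sub (X : Frol) (P : X -> Prop) c :
  crv (Sub X P) c <-> crv X (fun s => proj1_sig (c s)).
Proof.
  simpl. unfold crv_of. split.
  - intros H. apply (proj2 (crv_sat X _)). intros f Hf.
    apply (H (fun a => f (proj1_sig a))). eauto.
  - intros H g [f [Hf ->]]. exact (proj1 (crv_sat X _) H f Hf).
Qed.

Lemma crv_Prod (X Y : Frol) c :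
  crv (Prod X Y) c <-> crv X (fun s => fst (c s)) /\ crv Y (fun s => snd (c s)).
Proof.
  simpl. unfold crv_of. split.
  - intros H. split; apply (proj2 (crv_sat _ _)); intros f Hf.
    + apply (H (fun p => f (fst p))). left; eauto.
    + apply (H (fun p => f (snd p))). right; eauto.
  - intros [H1 H2] g [[f [Hf ->]] | [f [Hf ->]]].
    + exact (proj1 (crv_sat X _) H1 f Hf).
    + exact (proj1 (crv_sat Y _) H2 f Hf).
Qed.

Lemma crv_I c : crv I c <-> Cinf (fun s => proj1_sig (c s)).
Proof. unfold I. rewrite crv_Sub. apply crv_R. Qed.

(** [boldI] has fewer structure functions than [I], hence more curves. *)
Lemma crv_boldI c : crv I c -> crv boldI c.
Proof.
  intros H g [Hg _]. exact (proj1 (fns_sat I _) Hg c H).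
Qed.

Definition flat (phi : R -> R) : Prop :=
  Cinf phi /\ exists a b,
    (forall t, t < 1/5 -> phi t = a) /\ (forall t, 4/5 < t -> phi t = b).

Lemma fns_boldI phi : flat phi -> fns boldI (fun t => phi (proj1_sig t)).
Proof.
  intros [Hs [a [b [Ha Hb]]]] c Hc. apply (Hc (fun t => phi (proj1_sig t))). split.
  - apply (proj2 (fns_sat I _)). intros d Hd. apply smooth_Cinf.
    apply (Cinf_comp phi (fun s => proj1_sig (d s))); auto. apply crv_I; auto.
  - exists (1/5). split; [lra |]. exists a, b.
    intros t; split; intros; [apply Ha | apply Hb]; lra.
Qed.

Lemma flat_ramp a b : 1/5 <= a -> a < b -> b <= 4/5 -> flat (ramp a b).
Proof.
  intros. split; [apply Cinf_ramp |]. exists 0, 1.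
  split; intros; [apply ramp_lo | apply ramp_hi]; lra.
Qed.

Lemma flat_coramp a b : 1/5 <= a -> a < b -> b <= 4/5 -> flat (fun z => 1 - ramp a b z).
Proof.
  intros. split; [apply Cinf_minus; [apply Cinf_const | apply Cinf_ramp] |].
  exists 1, 0. split; intros; [rewrite ramp_lo | rewrite ramp_hi]; lra.
Qed.

Lemma Cinf_flat_comp (X : Frol) (u : X -> car boldI) phi x :
  smooth_map X boldI u -> flat phi -> crv X x ->
  Cinf (fun s => phi (proj1_sig (u (x s)))).
Proof.
  intros Hu Hp Hx. apply (crv_fns X x (fun y => phi (proj1_sig (u y)))); auto.
  apply (Hu (fun t => phi (proj1_sig t))). apply fns_boldI; auto.
Qed.

Lemma level_below_nbhd (X : Frol) (u : X -> car boldI) x a b s0 :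
  smooth_map X boldI u -> crv X x -> 1/5 <= a -> a < b -> b <= 4/5 ->
  proj1_sig (u (x s0)) <= a ->
  exists d, 0 < d /\ forall s, Rabs (s - s0) < d -> proj1_sig (u (x s)) < b.
Proof.
  intros Hu Hx Ha Hab Hb H0.
  destruct (Cinf_pos_nbhd (fun s => 1 - ramp a b (proj1_sig (u (x s)))) s0)
    as [d [Hd Hball]].
  - apply (Cinf_flat_comp X u (fun z => 1 - ramp a b z)); auto. apply flat_coramp; auto.
  - rewrite ramp_lo by auto. lra.
  - exists d; split; auto. intros s Hs. specialize (Hball s Hs).
    destruct (Rlt_le_dec (proj1_sig (u (x s))) b); auto.
    rewrite ramp_hi in Hball; lra.
Qed.

Lemma level_above_nbhd (X : Frol) (u : X -> car boldI) x a b s0 :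
  smooth_map X boldI u -> crv X x -> 1/5 <= a -> a < b -> b <= 4/5 ->
  b <= proj1_sig (u (x s0)) ->
  exists d, 0 < d /\ forall s, Rabs (s - s0) < d -> a < proj1_sig (u (x s)).
Proof.
  intros Hu Hx Ha Hab Hb H0.
  destruct (Cinf_pos_nbhd (fun s => ramp a b (proj1_sig (u (x s)))) s0)
    as [d [Hd Hball]].
  - apply (Cinf_flat_comp X u (ramp a b)); auto. apply flat_ramp; auto.
  - rewrite ramp_hi by auto. lra.
  - exists d; split; auto. intros s Hs. specialize (Hball s Hs).
    destruct (Rlt_le_dec a (proj1_sig (u (x s)))); auto.
    rewrite ramp_lo in Hball; lra.
Qed.

Lemma sig_eq {T} (P : T -> Prop) (a b : {x | P x}) : proj1_sig a = proj1_sig b -> a = b.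
Proof. destruct a, b; simpl; intros ->. f_equal; apply proof_irrelevance. Qed.

(** The point [max 0 (min 1 r)] of [I]; used to turn real-valued time
    parameters known to lie in [[0,1]] into points of [I]. *)
Lemma clamp_range r : 0 <= Rmax 0 (Rmin 1 r) <= 1.
Proof. split; [apply Rmax_l | apply Rmax_lub; [lra | apply Rmin_l]]. Qed.

Definition clampI (r : R) : car I := exist (fun t : R => 0 <= t <= 1) _ (clamp_range r).

Lemma clampI_val r : 0 <= r <= 1 -> proj1_sig (clampI r) = r.
Proof. intros H. simpl. rewrite Rmin_right by lra. rewrite Rmax_right; lra. Qed.

Lemma clampI_eq r (t : car I) : proj1_sig t = r -> clampI r = t.
Proof.
  intros H. apply sig_eq. destruct t as [x Hx]. simpl in H. subst. apply clampI_val; auto.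
Qed.

Lemma crv_clampI tau :
  Cinf tau -> (forall s, 0 <= tau s <= 1) -> crv I (fun s => clampI (tau s)).
Proof.
  intros Hs Hr. apply crv_I. apply Cinf_ext with tau; auto.
  intros; rewrite clampI_val; auto.
Qed.

Lemma phomotopic_sym (X W : PFrol) f g : phomotopic X W f g -> phomotopic X W g f.
Proof.
  intros [H [HS [H0 [H1 Hb]]]].
  exists (fun p => H (clampI (1 - proj1_sig (fst p)), snd p)).
  split; [| split; [| split]].
  - apply smooth_map_of_crv. intros c Hc. apply crv_Prod in Hc as [C1 C2].
    apply (smooth_map_crv _ _ H _ HS). apply crv_Prod. split; simpl; auto.
    apply crv_clampI.
    + apply Cinf_minus; [apply Cinf_const | apply crv_I; auto].
    + intros s. pose proof (proj2_sig (fst (c s))) as Ht. simpl in Ht. lra.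
  - intros x. rewrite (clampI_eq _ i1) by (simpl; ring). apply H1.
  - intros x. rewrite (clampI_eq _ i0) by (simpl; ring). apply H0.
  - intros t. apply Hb.
Qed.

Lemma phomotopic_restrict (X W : PFrol) A hA f g : phomotopic X W f g ->
  phomotopic (PSub X A hA) W (fun a => f (proj1_sig a)) (fun a => g (proj1_sig a)).
Proof.
  intros [H [HS [H0 [H1 Hb]]]].
  exists (fun p => H (fst p, proj1_sig (snd p))). split; [| split; [| split]].
  - apply smooth_map_of_crv. intros c Hc. apply crv_Prod in Hc as [C1 C2].
    apply (smooth_map_crv _ _ H _ HS). apply crv_Prod.
    split; simpl; auto. apply crv_Sub in C2. exact C2.
  - intros; apply H0.
  - intros; apply H1.
  - intros t; apply Hb.
Qed.

Lemma htpy_eq_restrict (X W : PFrol) A hA f g : htpy_eq X W f g ->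
  htpy_eq (PSub X A hA) W (fun a => f (proj1_sig a)) (fun a => g (proj1_sig a)).
Proof.
  induction 1.
  - apply rst_step, phomotopic_restrict; auto.
  - apply rst_refl.
  - apply rst_sym; auto.
  - eapply rst_trans; eauto.
Qed.

Lemma qproj_collapse {X : Type} (A : X -> Prop) x y : A x -> A y -> qproj A x = qproj A y.
Proof.
  intros Ax Ay. apply sig_eq. simpl. apply functional_extensionality. intros z.
  apply propositional_extensionality. unfold qcls.
  split; intros [<- | [_ Az]]; right; auto.
Qed.

Lemma quot_factor (X W : PFrol) A f : pmap X W f -> (forall x, A x -> f x = bp W) ->
  exists g : car (PQuot X A) -> car W, pmap (PQuot X A) W g /\ forall x, g (qproj A x) = f x.
Proof.
  intros [Hf Hfb] HA.
  assert (WD : forall x y, qcls A x = qcls A y -> f x = f y).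
  { intros x y E. assert (Hy : qcls A y y) by (left; auto). rewrite <- E in Hy.
    destruct Hy as [-> | [Ax Ay]]; auto. rewrite !HA; auto. }
  pose (rep := fun S : Qcar X A =>
                 proj1_sig (constructive_indefinite_description _ (proj2_sig S))).
  assert (Hg : forall x, f (rep (qproj A x)) = f x).
  { intros x. unfold rep. destruct (constructive_indefinite_description _ _) as [y Hy].
    simpl. symmetry. apply WD. exact Hy. }
  exists (fun S => f (rep S)). split; [split |]; auto.
  - intros h Hh c [c0 [Hc0 ->]].
    replace (fun s => h (f (rep (qproj A (c0 s))))) with (fun s => h (f (c0 s))).
    + exact (proj1 (fns_sat X _) (Hf h Hh) c0 Hc0).
    + apply functional_extensionality; intros s. rewrite Hg; auto.
  - exact (eq_trans (Hg (bp X)) Hfb).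
Qed.

Lemma clos_rst_in_preorder {T} (R P : relation T) :
  reflexive T P -> transitive T P -> (forall x y, R x y -> P x y /\ P y x) ->
  forall x y, clos_refl_sym_trans T R x y -> P x y.
Proof.
  intros Hrefl Htrans HR x y Hxy.
  enough (P x y /\ P y x) by tauto.
  induction Hxy as [x y Hs | x | x y _ IH | x y z _ IH1 _ IH2].
  - auto.
  - auto.
  - tauto.
  - split; [apply Htrans with y | apply Htrans with y]; tauto.
Qed.

Lemma mult_range01 a b : 0 <= a <= 1 -> 0 <= b <= 1 -> 0 <= a * b <= 1.
Proof.
  intros [] []. split; [apply Rmult_le_pos; auto |].
  rewrite <- (Rmult_1_r 1). apply Rmult_le_compat; auto.
Qed.

Definition mu (z : R) : R := 1 - ramp (1/3) (2/3) z.
Definition nu (z : R) : R := 1 - ramp (1/5) (1/4) z.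

Lemma flat_mu : flat mu.
Proof. apply flat_coramp; lra. Qed.

Lemma flat_nu : flat nu.
Proof. apply flat_coramp; lra. Qed.

Lemma mu_range z : 0 <= mu z <= 1.
Proof. unfold mu. pose proof (ramp_range (1/3) (2/3) z). lra. Qed.

Lemma nu_range z : 0 <= nu z <= 1.
Proof. unfold nu. pose proof (ramp_range (1/5) (1/4) z). lra. Qed.

Lemma mu_1 z : z <= 1/3 -> mu z = 1.
Proof. intros. unfold mu. rewrite ramp_lo; lra. Qed.

Lemma nu_1 z : z <= 1/5 -> nu z = 1.
Proof. intros. unfold nu. rewrite ramp_lo; lra. Qed.

Lemma nu_0 z : 1/4 <= z -> nu z = 0.
Proof. intros. unfold nu. rewrite ramp_hi; lra. Qed.

(** First [f] is deformed along [H] on the region [u <= 1/3], giving [f1]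
    which near [A] factors through the retraction [x |-> H(1,x)]; then [K] is
    run on that region, damped by [nu(u x)] so that nothing moves where
    [u >= 1/4]. *)
Section HomotopyExtension.

Variables (X : PFrol) (A : car X -> Prop) (hA : A (bp X)).
Variables (u : car X -> car boldI) (H : car (Prod boldI X) -> car X).
Hypothesis u_smooth : smooth_map X boldI u.
Hypothesis u_A : forall x, A x -> proj1_sig (u x) = 0.
Hypothesis H_smooth : smooth_map (Prod boldI X) X H.
Hypothesis H_i0 : forall x, H (i0, x) = x.
Hypothesis H_A : forall t a, A a -> H (t, a) = a.
Hypothesis H_i1 : forall x, proj1_sig (u x) < 1 -> A (H (i1, x)).

Variables (W : PFrol) (phi psi : car (PSub X A hA) -> car W).
Variable K : car (Prod I (PSub X A hA)) -> car W.
Hypothesis K_smooth : smooth_map (Prod I (PSub X A hA)) W K.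
Hypothesis K_i0 : forall a, K (i0, a) = phi a.
Hypothesis K_i1 : forall a, K (i1, a) = psi a.
Hypothesis K_bp : forall t, K (t, bp (PSub X A hA)) = bp W.

Variable f : car X -> car W.
Hypothesis f_smooth : smooth_map X W f.
Hypothesis f_bp : f (bp X) = bp W.
Hypothesis f_A : forall a, f (proj1_sig a) = phi a.

Let level (x : car X) : R := proj1_sig (u x).

Lemma level_A (a : car (PSub X A hA)) : level (proj1_sig a) = 0.
Proof. apply u_A, proj2_sig. Qed.

(** The retraction [x |-> H(1,x)] of [{u < 1}] onto [A], extended arbitrarily. *)
Definition retractA (y : car X) : car (PSub X A hA) :=
  match Rlt_dec (proj1_sig (u y)) 1 with
  | left h => exist A (H (i1, y)) (H_i1 y h)
  | right _ => bp (PSub X A hA)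
  end.

Lemma retractA_val y : level y < 1 -> proj1_sig (retractA y) = H (i1, y).
Proof.
  intros Hy. unfold retractA.
  destruct (Rlt_dec _ _); [reflexivity | unfold level in Hy; lra].
Qed.

Lemma retractA_on_A (a : car (PSub X A hA)) : retractA (proj1_sig a) = a.
Proof.
  apply sig_eq. rewrite retractA_val by (rewrite level_A; lra).
  apply H_A, proj2_sig.
Qed.

Lemma crv_H (tau : R -> R) (x : R -> car X) :
  Cinf tau -> (forall s, 0 <= tau s <= 1) -> crv X x ->
  crv X (fun s => H (clampI (tau s), x s)).
Proof.
  intros Ht Hr Hx. apply (smooth_map_crv _ _ H _ H_smooth).
  apply crv_Prod. split; auto. apply crv_boldI, crv_clampI; auto.
Qed.

Lemma crv_retractA x : crv X x -> (forall s, level (x s) < 1) ->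
  crv (PSub X A hA) (fun s => retractA (x s)).
Proof.
  intros Hx Hl. apply crv_Sub. apply crv_ext with (fun s => H (i1, x s)).
  - apply (smooth_map_crv _ _ H _ H_smooth). apply crv_Prod. cbn [fst snd].
    split; auto. apply crv_const.
  - intros s. rewrite retractA_val; auto.
Qed.

Definition f1 (x : car X) : car W := f (H (clampI (mu (level x)), x)).

Lemma crv_f1 x : crv X x -> crv W (fun s => f1 (x s)).
Proof.
  intros Hx. apply (smooth_map_crv _ _ f _ f_smooth). apply crv_H; auto.
  - apply (Cinf_flat_comp X u mu x); auto. apply flat_mu.
  - intros; apply mu_range.
Qed.

Lemma f_htpy_f1 : phomotopic X W f f1.
Proof.
  exists (fun p : car (Prod I X) =>
            f (H (clampI (proj1_sig (fst p) * mu (level (snd p))), snd p))).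
  split; [| split; [| split]].
  - apply smooth_map_of_crv. intros c Hc. apply crv_Prod in Hc as [C1 C2].
    apply (smooth_map_crv _ _ f _ f_smooth). apply crv_H; auto.
    + apply Cinf_mult; [apply crv_I; auto |].
      apply (Cinf_flat_comp X u mu (fun s => snd (c s))); auto. apply flat_mu.
    + intros s. apply mult_range01; [exact (proj2_sig (fst (c s))) | apply mu_range].
  - intros x. simpl fst. rewrite (clampI_eq _ i0) by (simpl; ring). rewrite H_i0; reflexivity.
  - intros x. simpl fst. unfold f1. rewrite Rmult_1_l. reflexivity.
  - intros t. simpl snd. rewrite H_A by exact hA. exact f_bp.
Qed.

Lemma K_start y : level y < 1/3 -> K (i0, retractA y) = f1 y.
Proof.
  intros Hy. rewrite K_i0, <- f_A, retractA_val by lra.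
  unfold f1. rewrite mu_1 by lra. rewrite (clampI_eq 1 i1) by reflexivity. reflexivity.
Qed.

Definition F (p : car (Prod I X)) : car W :=
  if Rlt_dec (level (snd p)) (1/3)
  then K (clampI (proj1_sig (fst p) * nu (level (snd p))), retractA (snd p))
  else f1 (snd p).

Lemma F_near t x : level x < 1/3 ->
  F (t, x) = K (clampI (proj1_sig t * nu (level x)), retractA x).
Proof. intros Hx. unfold F. simpl. destruct (Rlt_dec _ _); [reflexivity | lra]. Qed.

Lemma F_far t x : 1/4 <= level x -> F (t, x) = f1 x.
Proof.
  intros Hx. unfold F. simpl. destruct (Rlt_dec _ _) as [Hl|]; [| reflexivity].
  rewrite nu_0, (clampI_eq _ i0) by (simpl; ring || lra). apply K_start; auto.
Qed.

Lemma F_i0 x : F (i0, x) = f1 x.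
Proof.
  unfold F. simpl. destruct (Rlt_dec _ _) as [Hl|]; [| reflexivity].
  rewrite (clampI_eq _ i0) by (simpl; ring). apply K_start; auto.
Qed.

Lemma F_i1_A a : F (i1, proj1_sig a) = psi a.
Proof.
  rewrite F_near by (rewrite level_A; lra). rewrite level_A, nu_1 by lra.
  rewrite (clampI_eq _ i1) by (simpl; ring). rewrite retractA_on_A. apply K_i1.
Qed.

Lemma F_bp t : F (t, bp X) = bp W.
Proof.
  rewrite F_near by (unfold level; rewrite u_A by exact hA; lra).
  change (bp X) with (proj1_sig (bp (PSub X A hA))). rewrite retractA_on_A. apply K_bp.
Qed.

(** [F] is smooth: near parameters where [u < 0.3] it is given by [K], near
    parameters where [u > 0.26] it equals [f1]. *)
Lemma F_smooth : smooth_map (Prod I X) W F.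
Proof.
  apply smooth_map_of_crv. intros c Hc. apply crv_Prod in Hc as [C1 C2].
  set (x := fun s => snd (c s)) in C2.
  apply crv_ext with (fun s => F (fst (c s), x s));
    [| intros s; unfold x; destruct (c s); reflexivity].
  apply crv_local. intros s0.
  destruct (Rle_lt_dec (level (x s0)) 0.27) as [Hle|Hlt].
  - destruct (level_below_nbhd X u x 0.27 0.3 s0 u_smooth C2
                ltac:(lra) ltac:(lra) ltac:(lra) Hle) as [d [Hd Hball]].
    exists d; split; auto. intros sg Ssg Bsg.
    assert (Hlev : forall s, level (x (sg s)) < 0.3) by (intros s; apply Hball, Bsg).
    apply crv_ext with (fun s => K (clampI (proj1_sig (fst (c (sg s))) * nu (level (x (sg s)))),
                                     retractA (x (sg s)))).
    + apply (smooth_map_crv _ _ K _ K_smooth). apply crv_Prod. split.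
      * apply crv_clampI.
        -- apply Cinf_mult.
           ++ apply (Cinf_comp (fun s => proj1_sig (fst (c s))) sg); auto. apply crv_I; auto.
           ++ apply (Cinf_flat_comp X u nu (fun s => x (sg s))); auto.
              ** apply flat_nu.
              ** apply crv_reparam; auto.
        -- intros s. apply mult_range01; [exact (proj2_sig (fst (c (sg s)))) | apply nu_range].
      * apply crv_retractA; [apply crv_reparam; auto |]. intros s. specialize (Hlev s). lra.
    + intros s. rewrite F_near; auto. specialize (Hlev s). lra.
  - destruct (level_above_nbhd X u x 0.26 0.27 s0 u_smooth C2
                ltac:(lra) ltac:(lra) ltac:(lra) (Rlt_le _ _ Hlt)) as [d [Hd Hball]].
    exists d; split; auto. intros sg Ssg Bsg.
    apply crv_ext with (fun s => f1 (x (sg s))).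
    + apply crv_f1, crv_reparam; auto.
    + intros s. rewrite F_far; auto. specialize (Hball _ (Bsg s)). unfold level. lra.
Qed.

Theorem homotopy_extension_step :
  exists f', pmap X W f' /\ (forall a, f' (proj1_sig a) = psi a) /\ htpy_eq X W f f'.
Proof.
  exists (fun x => F (i1, x)). split; [split | split].
  - apply smooth_map_of_crv. intros c Hc. apply (smooth_map_crv _ _ F _ F_smooth).
    apply crv_Prod. cbn [fst snd]. split; auto. apply crv_const.
  - apply F_bp.
  - apply F_i1_A.
  - apply rst_trans with f1; apply rst_step.
    + apply f_htpy_f1.
    + exists F. split; [exact F_smooth | split; [exact F_i0 | split; [reflexivity | exact F_bp]]].
Qed.

End HomotopyExtension.

Lemma homotopy_extension (X : PFrol) A hA (W : PFrol) phi psi f :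
  SNDR X A -> phomotopic (PSub X A hA) W phi psi ->
  pmap X W f -> (forall a, f (proj1_sig a) = phi a) ->
  exists f', pmap X W f' /\ (forall a, f' (proj1_sig a) = psi a) /\ htpy_eq X W f f'.
Proof.
  intros [u [Hu [Hu0 [H [HH [_ [H0 [HA H1]]]]]]]] [K [HK [K0 [K1 Kb]]]] [Hf Hfb] Hfa.
  apply (homotopy_extension_step X A hA u H Hu (fun x Ax => proj2 (Hu0 x) Ax)
           HH H0 HA H1 W phi psi K HK K0 K1 Kb f Hf Hfb Hfa).
Qed.

Definition extends_up_to_htpy (X : PFrol) A hA (W : PFrol)
    (phi psi : car (PSub X A hA) -> car W) : Prop :=
  forall f, pmap X W f -> (forall a, f (proj1_sig a) = phi a) ->
  exists f', pmap X W f' /\ (forall a, f' (proj1_sig a) = psi a) /\ htpy_eq X W f f'.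

Lemma htpy_eq_extends (X : PFrol) A hA (W : PFrol) phi psi : SNDR X A ->
  htpy_eq (PSub X A hA) W phi psi -> extends_up_to_htpy X A hA W phi psi.
Proof.
  intros HS. apply clos_rst_in_preorder.
  - intros phi0 f Hf Ha. exists f. repeat split; try apply Hf; auto. apply rst_refl.
  - intros phi0 chi psi0 E1 E2 f Hf Ha.
    destruct (E1 f Hf Ha) as [f1 [P1 [A1 T1]]].
    destruct (E2 f1 P1 A1) as [f2 [P2 [A2 T2]]].
    exists f2. repeat split; try apply P2; auto. apply rst_trans with f1; auto.
  - intros phi0 psi0 Hp. split; intros f Hf Ha.
    + apply homotopy_extension with phi0; auto.
    + apply homotopy_extension with psi0; auto. apply phomotopic_sym; auto.
Qed.

Theorem lemma6 (X : PFrol) (A : car X -> Prop) (hA : A (bp X)) :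
  SNDR X A ->
  forall (W : PFrol) (f : car X -> car W), pmap X W f ->
    ((exists g : car (PQuot X A) -> car W,
        pmap (PQuot X A) W g /\ htpy_eq X W (fun x => g (qproj A x)) f)
     <-> htpy_eq (PSub X A hA) W (fun a => f (proj1_sig a)) (fun _ => bp W)).
Proof.
  intros HS W f Hf. split.
  - intros [g [[_ Hgb] Ht]]. apply rst_sym.
    replace (fun _ : car (PSub X A hA) => bp W)
      with (fun a : car (PSub X A hA) => g (qproj A (proj1_sig a))).
    + exact (htpy_eq_restrict X W A hA _ _ Ht).
    + apply functional_extensionality. intros [a Ha]. simpl.
      rewrite <- Hgb. f_equal. apply qproj_collapse; auto.
  - intros Ht.
    destruct (htpy_eq_extends X A hA W _ _ HS Ht f Hf (fun a => eq_refl))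
      as [f' [Pf' [Ef' Tf']]].
    destruct (quot_factor X W A f' Pf') as [g [Pg Eg]].
    { intros x Ax. exact (Ef' (exist A x Ax)). }
    exists g. split; auto.
    replace (fun x => g (qproj A x)) with f'.
    + apply rst_sym; auto.
    + apply functional_extensionality; intros; rewrite Eg; auto.
Qed.
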